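(* Let $G^{\mathcal X}_r=(V_r,E^{\mathcal X}_r,s_r)$ be an extraction order and $l\in V_r$. Then $\mathcal L_e=\mathcal L_{e'}$ for every pair of incoming edges $e,e'\in E^{\mathcal X}_r$ of $l$.
   Context: An extraction order of a directed graph $G_r=(V_r,E_r)$ is a rooted directed acyclic graph $G^{\mathcal X}_r=(V_r,E^{\mathcal X}_r,s_r)$ in which every node is reachable from $s_r$ and $E^{\mathcal X}_r$ is obtained from $E_r$ by reversing some (possibly no) edges. A confluence from $i$ to $j$ is a pair of directed paths in $E^{\mathcal X}_r$ from $i$ to $j$ sharing no node other than $i$ and $j$. For $e\in E^{\mathcal X}_r$, the label set $\mathcal L_e\subseteq V_r$ is the set of nodes $j$ such that $e$ belongs to some confluence with target $j$. *)

From mathcomp Require Import all_boot.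
Set Implicit Arguments. Unset Strict Implicit. Unset Printing Implicit Defensive.

Section ExtractionOrder.
Variables (V : finType) (Er : {set V * V}) (flip : V * V -> bool).
(* G_r = (V, Er) is a directed graph; an edge (u,v) \in Er goes from u to v.
   The extraction order G^X has the same edges, where the edges e with
   [flip e = true] are reversed. *)

Definition xsrc (e : V * V) : V := if flip e then e.2 else e.1.
Definition xtgt (e : V * V) : V := if flip e then e.1 else e.2.

Fixpoint xwalk (x y : V) (p : seq (V * V)) : bool :=
  match p with
  | [::] => x == y
  | e :: p' => [&& e \in Er, xsrc e == x & xwalk (xtgt e) y p']
  end.

Definition xnodes (x : V) (p : seq (V * V)) : seq V := x :: map xtgt p.

Definition xpath (x y : V) (p : seq (V * V)) : bool :=
  xwalk x y p && uniq (xnodes x p).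

Definition extraction_order (s : V) : Prop :=
  (forall v p, xwalk v v p -> p = [::]) /\
  (forall v, exists p, xwalk s v p).

Definition confluence (i j : V) (p q : seq (V * V)) : Prop :=
  [/\ xpath i j p, xpath i j q, p != q &
      forall v, v \in xnodes i p -> v \in xnodes i q -> v = i \/ v = j].

Definition in_label (e : V * V) (j : V) : Prop :=
  exists i p q, confluence i j p q /\ (e \in p \/ e \in q).

End ExtractionOrder.

(* Let (p, q) be a confluence from i to j with e on p, say p = p1 e p2, and let
   e' be another edge into l = tgt e that is not on q.  Call a node an anchor if
   it lies on q or on p1, or if i is reachable from it (so the root is one).
   On a walk from the root to the source of e', let x be the last anchor, and
   let P' be the rest of that walk followed by e' and p2.  Acyclicity makes every
   walk a path and keeps p2 away from p1 and from every walk back to i, so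
   P' meets anchors only at x and the old confluence only along p2.  Then:
   if x lies on q, P' and the rest of q from x form a confluence; if x lies on
   p1, the part of p1 up to x followed by P', together with q, do; otherwise a
   path from x to i followed by q, together with P', do.  In each case e' lies
   on a confluence with target j. *)

From mathcomp Require Import all_boot.
From Stdlib Require Import Classical.
Set Implicit Arguments. Unset Strict Implicit. Unset Printing Implicit Defensive.

Section Walks.
Variables (V : finType) (Er : {set V * V}) (flip : V * V -> bool).
Local Notation walk := (xwalk Er flip).
Local Notation nodes := (xnodes flip).
Local Notation src := (xsrc flip).
Local Notation tgt := (xtgt flip).

Lemma xwalk_cat x m y p q : walk x m p -> walk m y q -> walk x y (p ++ q).
Proof.
elim: p x => [|e p IHp] x /=; first by move/eqP->.
by case/and3P=> -> -> /IHp walk_pq /walk_pq ->.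
Qed.

Lemma xwalk_cat_inv x y p q : walk x y (p ++ q) -> exists2 m, walk x m p & walk m y q.
Proof.
elim: p x => [|e p IHp] x /=; first by exists x.
by case/and3P=> -> -> /IHp[m walk_p walk_q]; exists m.
Qed.

Lemma xwalk_edge_inv x y p1 e p2 : walk x y (p1 ++ e :: p2) ->
  [/\ walk x (src e) p1, e \in Er & walk (tgt e) y p2].
Proof. by case/xwalk_cat_inv=> m walk_p1 /= /and3P[-> /eqP -> ->]. Qed.

Lemma mem_xnodes_end x y p : walk x y p -> y \in nodes x p.
Proof.
elim: p x => [|e p IHp] x /=; first by move/eqP->; rewrite mem_seq1.
by case/and3P=> _ _ /IHp; rewrite !inE => ->; rewrite orbT.
Qed.

Lemma mem_xnodes_cat x m p : walk x m p -> forall q v,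
  (v \in nodes x (p ++ q)) = (v \in nodes x p) || (v \in nodes m q).
Proof.
move=> /mem_xnodes_end m_in_p q v; rewrite {1}/xnodes map_cat -cat_cons mem_cat.
have [->|/negbTE v_neq_m] := eqVneq v m; first by rewrite m_in_p.
by rewrite [v \in nodes m q]inE v_neq_m.
Qed.

Lemma mem_xnodes_catl x v p q : v \in nodes x p -> v \in nodes x (p ++ q).
Proof. by rewrite /xnodes map_cat -cat_cons mem_cat => ->. Qed.

Lemma xwalk_split_node x y v p : walk x y p -> v \in nodes x p ->
  exists p1 p2, [/\ p = p1 ++ p2, walk x v p1 & walk v y p2].
Proof.
elim: p x => [|e p IHp] x /=.
  by move=> walk_xy; rewrite mem_seq1 => /eqP->; exists [::], [::]; rewrite /= eqxx.
case/and3P=> He /eqP src_e walk_p; rewrite inE; case/orP=> [/eqP->|/(IHp _ walk_p)].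
  by exists [::], (e :: p); rewrite /= He src_e eqxx walk_p.
by case=> [p1 [p2 [-> walk_p1 walk_p2]]]; exists (e :: p1), p2; rewrite /= He src_e eqxx.
Qed.

Lemma xwalk_last_suffix (W : V -> Prop) a b p : walk a b p ->
    (exists2 v, v \in nodes a p & W v) ->
  exists x r, [/\ W x, walk x b r & forall v, v \in map tgt r -> ~ W v].
Proof.
elim: p a => [|e p IHp] a /=.
  move=> /eqP-> [v]; rewrite mem_seq1 => /eqP-> Wb.
  by exists b, [::]; split; rewrite /= ?eqxx.
case/and3P=> He /eqP src_e walk_p [v Hv Wv].
have [later|never] := classic (exists2 v, v \in nodes (tgt e) p & W v).
  exact: IHp walk_p later.
exists a, (e :: p); split.
- move: Hv; rewrite in_cons => /orP[/eqP<- //|Hv].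
  by case: never; exists v.
- by rewrite /= He src_e eqxx.
- by move=> w Hw Ww; apply: never; exists w.
Qed.

Lemma confluence_sym i j p q :
  confluence Er flip i j p q -> confluence Er flip i j q p.
Proof.
case=> path_p path_q neq_pq meet; split=> //; first by rewrite eq_sym.
by move=> v Hq Hp; apply: meet.
Qed.

Section Acyclic.
Hypothesis acyclic : forall v p, walk v v p -> p = [::].

Lemma xwalk_no_return a b r t : walk a b r -> r != [::] -> ~ walk b a t.
Proof.
move=> walk_r r_nonempty walk_t; have := acyclic (xwalk_cat walk_r walk_t).
by case: r r_nonempty {walk_r}.
Qed.

Lemma xwalk_uniq x y p : walk x y p -> uniq (nodes x p).
Proof.
elim: p x => [|e p IHp] x // /and3P[He /eqP src_e walk_p].
rewrite (_ : nodes x (e :: p) = x :: nodes (tgt e) p) // cons_uniq.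
rewrite (IHp _ walk_p) andbT; apply/negP=> /(xwalk_split_node walk_p).
case=> [p1 [_ [_ walk_p1 _]]]; apply: (xwalk_no_return (r := [:: e])) walk_p1 => //=.
by rewrite He src_e !eqxx.
Qed.

Lemma xwalk_xpath x y p : walk x y p -> xpath Er flip x y p.
Proof. by move=> walk_p; rewrite /xpath walk_p (xwalk_uniq walk_p). Qed.

Section Reroute.
Variables (i j : V) (p1 p2 q : seq (V * V)) (e e' : V * V).
Hypotheses (conf_pq : confluence Er flip i j (p1 ++ e :: p2) q)
  (Er_e' : e' \in Er) (tgt_e' : tgt e' = tgt e) (e'_notin_q : e' \notin q).

Let walk_q : walk i j q. Proof. by case: conf_pq => _ /andP[]. Qed.
Let walk_p1 : walk i (src e) p1.
Proof. by case: conf_pq => /andP[/xwalk_edge_inv[]]. Qed.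
Let walk_e : walk (src e) (tgt e) [:: e].
Proof. by case: conf_pq => /andP[/xwalk_edge_inv[_ /= -> _] _]; rewrite !eqxx. Qed.
Let walk_p2 : walk (tgt e) j p2.
Proof. by case: conf_pq => /andP[/xwalk_edge_inv[]]. Qed.

Lemma mem_p2_in_p v : v \in nodes (tgt e) p2 -> v \in nodes i (p1 ++ e :: p2).
Proof.
have walk_p1e : walk i (tgt e) (rcons p1 e) by rewrite -cats1; apply: xwalk_cat walk_e.
by rewrite -cat_rcons (mem_xnodes_cat walk_p1e) => ->; rewrite orbT.
Qed.

Lemma p2_no_return v t : v \in nodes (tgt e) p2 -> ~ walk v i t.
Proof.
case/(xwalk_split_node walk_p2) => [a [_ [_ walk_a _]]] walk_t.
exact: xwalk_no_return walk_e _ (xwalk_cat walk_a (xwalk_cat walk_t walk_p1)).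
Qed.

Lemma i_notin_p2 : i \notin nodes (tgt e) p2.
Proof. by apply/negP=> /(p2_no_return (t := [::])); apply; exact: eqxx. Qed.

Lemma q_meets_p2_at_j v : v \in nodes i q -> v \in nodes (tgt e) p2 -> v = j.
Proof.
move=> v_q v_p2; case: conf_pq => _ _ _ /(_ v (mem_p2_in_p v_p2) v_q)[v_i|//].
by move: i_notin_p2; rewrite -v_i v_p2.
Qed.

Definition anchor v : Prop :=
  [\/ v \in nodes i q, v \in nodes i p1 | exists t, walk v i t].

Section Detour.
Variables (x : V) (r : seq (V * V)).
Hypotheses (walk_r : walk x (src e') r)
  (r_avoids_anchors : forall v, v \in map tgt r -> ~ anchor v).

Local Notation detour := (r ++ e' :: p2).

Lemma walk_detour : walk x j detour.
Proof. by apply: xwalk_cat walk_r _; rewrite /= Er_e' tgt_e' eqxx walk_p2. Qed.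

Lemma e'_in_detour : e' \in detour.
Proof. by rewrite mem_cat mem_head orbT. Qed.

Lemma mem_detour v : v \in nodes x detour ->
  [\/ v = x, ~ anchor v | v \in nodes (tgt e) p2].
Proof.
rewrite /xnodes map_cat /= tgt_e' in_cons mem_cat.
by case/or3P=> [/eqP|/r_avoids_anchors|]; [exact: Or31 | exact: Or32 | exact: Or33].
Qed.

Lemma detour_confluence Q : walk x j Q -> e' \notin Q ->
    (forall v, v \in nodes x Q -> anchor v) ->
    (forall v, v \in nodes x Q -> v \in nodes (tgt e) p2 -> v = j) ->
  confluence Er flip x j detour Q.
Proof.
move=> walk_Q e'_notin_Q Q_anchors Q_meets_p2.
split; [exact: xwalk_xpath walk_detour | exact: xwalk_xpath walk_Q | |].
  by apply: contraNneq e'_notin_Q => <-; exact: e'_in_detour.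
move=> v /mem_detour[->|not_anchor|v_p2] v_Q; first by left.
  by case: not_anchor; apply: Q_anchors.
by right; apply: Q_meets_p2.
Qed.

Lemma in_label_detour_on_q : x \in nodes i q -> in_label Er flip e' j.
Proof.
case/(xwalk_split_node walk_q) => [q1 [q2 [def_q walk_q1 walk_q2]]].
have mem_q2 v : v \in nodes x q2 -> v \in nodes i q.
  by rewrite def_q (mem_xnodes_cat walk_q1) => ->; rewrite orbT.
exists x, detour, q2; split; last by left; exact: e'_in_detour.
apply: detour_confluence => // [|v /mem_q2 v_q|v /mem_q2]; last exact: q_meets_p2_at_j.
  by apply: contra e'_notin_q; rewrite def_q mem_cat => ->; rewrite orbT.
exact: Or31.
Qed.

Lemma in_label_detour_on_p1 :
  x \notin nodes i q -> x \in nodes i p1 -> in_label Er flip e' j.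
Proof.
move=> x_notin_q /(xwalk_split_node walk_p1)[a [b [def_p1 walk_a _]]].
exists i, (a ++ detour), q; split; last by left; rewrite mem_cat e'_in_detour orbT.
split; [exact/xwalk_xpath/(xwalk_cat walk_a walk_detour) | exact: xwalk_xpath walk_q | |].
  by apply: contraNneq e'_notin_q => <-; rewrite mem_cat e'_in_detour orbT.
move=> v; rewrite (mem_xnodes_cat walk_a).
case/orP=> [v_a|/mem_detour[->|not_anchor|v_p2]] v_q.
- by case: conf_pq => _ _ _; apply; rewrite // def_p1 -catA mem_xnodes_catl.
- by rewrite v_q in x_notin_q.
- by case: not_anchor; exact: Or31.
- by right; exact: q_meets_p2_at_j.
Qed.

Lemma in_label_detour_return t : walk x i t -> in_label Er flip e' j.
Proof.
move=> walk_t.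
have e'_notin_t : e' \notin t.
  apply/negP=> e'_t; case/splitPr: e'_t walk_t => t1 t2 /xwalk_edge_inv[_ _].
  by rewrite tgt_e'; apply: p2_no_return (mem_head _ _).
have t_returns v : v \in nodes x t -> exists t', walk v i t'.
  by case/(xwalk_split_node walk_t) => [_ [t' [_ _ walk_t']]]; exists t'.
exists x, detour, (t ++ q); split; last by left; exact: e'_in_detour.
apply: detour_confluence (xwalk_cat walk_t walk_q) _ _ _.
- by rewrite mem_cat negb_or e'_notin_t.
- move=> v; rewrite (mem_xnodes_cat walk_t).
  by case/orP=> [/t_returns|]; [exact: Or33 | exact: Or31].
- move=> v; rewrite (mem_xnodes_cat walk_t) => /orP[/t_returns[t' walk_t'] v_p2|].
    by case: (p2_no_return v_p2 walk_t').
  exact: q_meets_p2_at_j.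
Qed.

End Detour.

Lemma in_label_reroute s : (forall v, exists p, walk s v p) -> in_label Er flip e' j.
Proof.
move=> reach; have [R walk_R] := reach (src e').
have [x [r [anchor_x walk_r r_avoids_anchors]]] := xwalk_last_suffix walk_R
  (ex_intro2 _ anchor s (mem_head _ _) (Or33 _ _ (reach i))).
have [x_q|x_notin_q] := boolP (x \in nodes i q).
  exact: in_label_detour_on_q walk_r r_avoids_anchors x_q.
case: anchor_x => [x_q|x_p1|[t walk_t]]; first by rewrite x_q in x_notin_q.
  exact: in_label_detour_on_p1 walk_r r_avoids_anchors x_notin_q x_p1.
exact: (in_label_detour_return walk_r r_avoids_anchors walk_t).
Qed.

End Reroute.
End Acyclic.

Lemma in_label_same_target s e e' j : extraction_order Er flip s ->
    e' \in Er -> tgt e' = tgt e ->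
  in_label Er flip e j -> in_label Er flip e' j.
Proof.
case=> acyclic reach Er_e' tgt_e' [i [p [q [conf_pq e_pq]]]].
wlog e_p : p q conf_pq {e_pq} / e \in p.
  move=> main; case: e_pq => [|e_q]; first exact: main conf_pq.
  exact: main (confluence_sym conf_pq) e_q.
have [e'_q|e'_notin_q] := boolP (e' \in q); first by exists i, p, q; split=> //; right.
case/splitPr: e_p conf_pq => p1 p2 conf_pq.
exact: (in_label_reroute acyclic conf_pq Er_e' tgt_e' e'_notin_q reach).
Qed.

End Walks.

Theorem lemma15 (V : finType) (Er : {set V * V}) (flip : V * V -> bool)
    (s : V) (HX : extraction_order Er flip s) (l : V) (e e' : V * V) :
  e \in Er -> e' \in Er -> xtgt flip e = l -> xtgt flip e' = l ->
  forall j : V, in_label Er flip e j <-> in_label Er flip e' j.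
Proof.
move=> Er_e Er_e' <- tgt_e' j.
by split; apply: in_label_same_target HX _ _ => //; rewrite tgt_e'.
Qed.
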